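(* Let $\mathcal A$ be a linearly ordered $\mathbf{IUL}_\omega$-algebra. Let $B\subseteq A$ be such that $\{e,f,\bot,\top\}\subseteq B$ and $\neg b\in B$ for all $b\in B$. Let $M$, $\bar D$, $D$ and the operations be as described in the context. Then: (i) $(b]=\sim\sim(b]$ for all $b\in B$; (ii) $(a\mapsto b]=\sim\sim(a\mapsto b]$ for all $(a\mapsto b]\in\bar D$; (iii) $X=\sim\sim X$ for all $X\in D$; (iv) $\mathcal D=\langle D,\cdot^D,\to^D,\vee^D,\wedge^D,e^D,f^D,\bot^D,\top^D\rangle$ is an $\mathbf{IUL}_\omega$-algebra.
   Context: A $\mathbf{UL}$-algebra is a structure $\langle A,\wedge,\vee,\cdot,\to,e,f,\bot,\top\rangle$ such that: - it is a bounded lattice; - $\langle A,\cdot,e\rangle$ is a commutative monoid; - $xy\le z$ iff $y\le x\to z$; - for all $x,y,u,v$: $\lambda_u((x\vee y)\to x)\vee\lambda_v((x\vee y)\to y)=e$, where $\lambda_a(b)=(a\to ba)\wedge e$. An $\mathbf{IUL}_\omega$-algebra is a $\mathbf{UL}$-algebra with $\neg\neg x=x$ (where $\neg x=x\to f$) and $x\to e=x^2\to e$ for all $x$. Construction. $M$ is the submonoid of $\langle A,\cdot,e\rangle$ generated by $B$. For $a\in M$ and $b\in B$, put $(a\mapsto b]=\{c\in M: ac\le b\}$. Let $\bar D=\{(a\mapsto b]:a\in M,b\in B\}$ and $D=\{\bigcap\chi:\chi\subseteq\bar D\}$, with the empty intersection equal to $M$. For $X\subseteq M$, $C(X)$ is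 the intersection of all members of $\bar D$ containing $X$. For $b\in A$, $(b]=\{c\in M:c\le b\}$. For $X,Y\subseteq M$ and $X_i\subseteq M$: - $X\cdot^DY=C(\{xy:x\in X,y\in Y\})$; - $X\to^DY=\{a\in M: Xa\subseteq Y\}$, where $Xa=\{xa:x\in X\}$; - $\bigvee^D_iX_i=C(\bigcup_iX_i)$ and $\bigwedge^D_iX_i=\bigcap_iX_i$; - $e^D=(e]$, $f^D=(f]$, $\bot^D=(\bot]$, $\top^D=(\top]=M$; - $\sim X=X\to^D(f]$. *)

Set Implicit Arguments.

Record ulsig (T : Type) := ULSig {
  mt : T -> T -> T;
  jn : T -> T -> T;
  ml : T -> T -> T;
  im : T -> T -> T;
  ue : T; uf : T; ub : T; ut : T }.
Arguments ULSig {T}.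

Section Alg.
Context {T : Type} (s : ulsig T).

Definition le (x y : T) : Prop := mt s x y = x.

Definition lam (a b : T) : T := mt s (im s a (ml s b a)) (ue s).

Definition neg (x : T) : T := im s x (uf s).

Definition is_UL : Prop :=
  (forall x y z, mt s x (mt s y z) = mt s (mt s x y) z) /\
  (forall x y z, jn s x (jn s y z) = jn s (jn s x y) z) /\
  (forall x y, mt s x y = mt s y x) /\
  (forall x y, jn s x y = jn s y x) /\
  (forall x y, mt s x (jn s x y) = x) /\
  (forall x y, jn s x (mt s x y) = x) /\
  (forall x, jn s (ub s) x = x) /\
  (forall x, mt s (ut s) x = x) /\
  (forall x y z, ml s x (ml s y z) = ml s (ml s x y) z) /\
  (forall x y, ml s x y = ml s y x) /\
  (forall x, ml s (ue s) x = x) /\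
  (forall x y z, le (ml s x y) z <-> le y (im s x z)) /\
  (* prelinearity *)
  (forall x y u v,
     jn s (lam u (im s (jn s x y) x)) (lam v (im s (jn s x y) y)) = ue s).

Definition is_IUL : Prop :=
  is_UL /\
  (forall x, neg (neg x) = x) /\
  (forall x, im s x (ue s) = im s (ml s x x) (ue s)).

Definition linear : Prop := forall x y, le x y \/ le y x.
End Alg.

Section Constr.
Context {A : Type} (s : ulsig A) (B : A -> Prop).

Definition seteq (X Y : A -> Prop) : Prop := forall c, X c <-> Y c.

Inductive inM : A -> Prop :=
  | inM_e : inM (ue s)
  | inM_mul : forall b a, B b -> inM a -> inM (ml s b a).

Definition arr (a b : A) : A -> Prop := fun c => inM c /\ le s (ml s a c) b.

Definition inDbar (X : A -> Prop) : Prop :=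
  exists a b, inM a /\ B b /\ seteq X (arr a b).

(** members of D: intersections of subfamilies of Dbar (empty one = M) *)
Definition inD (X : A -> Prop) : Prop :=
  exists chi : (A -> Prop) -> Prop,
    (forall Y, chi Y -> inDbar Y) /\
    seteq X (fun c => inM c /\ forall Y, chi Y -> Y c).

Definition Ccl (X : A -> Prop) : A -> Prop :=
  fun c => inM c /\ forall Y, inDbar Y -> (forall x, X x -> Y x) -> Y c.

Definition down (b : A) : A -> Prop := fun c => inM c /\ le s c b.

Definition mulD (X Y : A -> Prop) : A -> Prop :=
  Ccl (fun z => exists x y, X x /\ Y y /\ z = ml s x y).
Definition impD (X Y : A -> Prop) : A -> Prop :=
  fun a => inM a /\ forall x, X x -> Y (ml s x a).
Definition joinD (X Y : A -> Prop) : A -> Prop :=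
  Ccl (fun z => X z \/ Y z).
Definition meetD (X Y : A -> Prop) : A -> Prop :=
  fun z => X z /\ Y z.
Definition eD := down (ue s).
Definition fD := down (uf s).
Definition botD := down (ub s).
Definition topD := down (ut s).

Definition simD (X : A -> Prop) : A -> Prop := impD X fD.

Definition Dty : Type := { X : A -> Prop | inD X }.
End Constr.

(* Every member of D is an intersection of sets (a |-> b], and each of these is
   closed under ~~: the element neg b * a lies in ~(a |-> b], so c in ~~(a |-> b]
   gives neg b * (a * c) <= f, i.e. a * c <= neg (neg b) = b.  As ~~ is extensive
   and monotone, intersections of ~~-closed sets are ~~-closed.
   For (iv), C is a closure operator whose closed sets are exactly the members of
   D, so join, product and residuation in D are computed through C.  Members of D
   are down-sets of M, hence linearity of A makes D a chain; this gives
   prelinearity, and together with x -> e = x^2 -> e also X -> e = X^2 -> e in D. *)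

From Stdlib Require Import Classical FunctionalExtensionality PropExtensionality ProofIrrelevance.

Section ULTheory.
Context {A : Type} {s : ulsig A} (HU : is_UL s).

Lemma meet_assoc x y z : mt s x (mt s y z) = mt s (mt s x y) z.
Proof. destruct HU as (h & _). apply h. Qed.

Lemma meet_comm x y : mt s x y = mt s y x.
Proof. destruct HU as (_ & _ & h & _). apply h. Qed.

Lemma meet_join_absorb x y : mt s x (jn s x y) = x.
Proof. destruct HU as (_ & _ & _ & _ & h & _). apply h. Qed.

Lemma join_meet_absorb x y : jn s x (mt s x y) = x.
Proof. destruct HU as (_ & _ & _ & _ & _ & h & _). apply h. Qed.

Lemma join_bot_l x : jn s (ub s) x = x.
Proof. destruct HU as (_ & _ & _ & _ & _ & _ & h & _). apply h. Qed.

Lemma meet_top_l x : mt s (ut s) x = x.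
Proof. destruct HU as (_ & _ & _ & _ & _ & _ & _ & h & _). apply h. Qed.

Lemma mul_assoc x y z : ml s x (ml s y z) = ml s (ml s x y) z.
Proof. destruct HU as (_ & _ & _ & _ & _ & _ & _ & _ & h & _). apply h. Qed.

Lemma mul_comm x y : ml s x y = ml s y x.
Proof. destruct HU as (_ & _ & _ & _ & _ & _ & _ & _ & _ & h & _). apply h. Qed.

Lemma mul_e_l x : ml s (ue s) x = x.
Proof. destruct HU as (_ & _ & _ & _ & _ & _ & _ & _ & _ & _ & h & _). apply h. Qed.

Lemma residuation x y z : le s (ml s x y) z <-> le s y (im s x z).
Proof. destruct HU as (_ & _ & _ & _ & _ & _ & _ & _ & _ & _ & _ & h & _). apply h. Qed.

Lemma mul_e_r x : ml s x (ue s) = x.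
Proof. rewrite mul_comm. apply mul_e_l. Qed.

Lemma le_refl x : le s x x.
Proof.
  unfold le. rewrite <- (join_meet_absorb x x) at 2. apply meet_join_absorb.
Qed.

Lemma le_trans x y z : le s x y -> le s y z -> le s x z.
Proof.
  unfold le. intros hxy hyz. rewrite <- hxy at 1. rewrite <- meet_assoc, hyz. exact hxy.
Qed.

Lemma le_bot x : le s (ub s) x.
Proof. unfold le. rewrite <- (join_bot_l x) at 1. apply meet_join_absorb. Qed.

Lemma le_top x : le s x (ut s).
Proof. unfold le. rewrite meet_comm. apply meet_top_l. Qed.

Lemma mul_mono_l z x y : le s x y -> le s (ml s z x) (ml s z y).
Proof.
  intro hxy. apply residuation. apply le_trans with y; [exact hxy|].
  apply residuation, le_refl.
Qed.

Lemma mul_mono_r z x y : le s x y -> le s (ml s x z) (ml s y z).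
Proof. rewrite (mul_comm x), (mul_comm y). apply mul_mono_l. Qed.

Lemma le_neg_mul (Hnn : forall x, neg s (neg s x) = x) b y :
  le s (ml s (neg s b) y) (uf s) <-> le s y b.
Proof. rewrite residuation. fold (neg s (neg s b)). rewrite Hnn. reflexivity. Qed.

Lemma mul_le_e_square (Hw : forall x, im s x (ue s) = im s (ml s x x) (ue s)) y c :
  le s (ml s y c) (ue s) -> le s (ml s (ml s y y) c) (ue s).
Proof. intro h. apply residuation. rewrite <- Hw. apply residuation, h. Qed.

End ULTheory.

Definition subset {T : Type} (X Y : T -> Prop) : Prop := forall c, X c -> Y c.

Lemma set_ext {T : Type} (X Y : T -> Prop) : seteq X Y -> X = Y.
Proof.
  intro h. apply functional_extensionality; intro c.
  apply propositional_extensionality, h.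
Qed.

Lemma meetD_assoc {A : Type} (X Y Z : A -> Prop) : meetD X (meetD Y Z) = meetD (meetD X Y) Z.
Proof. apply set_ext; intro c. unfold meetD. tauto. Qed.

Lemma meetD_comm {A : Type} (X Y : A -> Prop) : meetD X Y = meetD Y X.
Proof. apply set_ext; intro c. unfold meetD. tauto. Qed.

Section Construction.
Context {A : Type} {s : ulsig A} {B : A -> Prop} (HU : is_UL s).
Implicit Types X Y Z U V W : A -> Prop.

Lemma inM_mul x y : inM s B x -> inM s B y -> inM s B (ml s x y).
Proof.
  induction 1 as [|b a hb ha IH]; intro hy.
  - rewrite (mul_e_l HU). exact hy.
  - rewrite <- (mul_assoc HU). constructor; auto.
Qed.

Lemma inDbar_inM X : inDbar s B X -> subset X (inM s B).
Proof. intros (a & b & _ & _ & hX) c hc. exact (proj1 (proj1 (hX c) hc)). Qed.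

Lemma inD_inM X : inD s B X -> subset X (inM s B).
Proof. intros (chi & _ & hX) c hc. exact (proj1 (proj1 (hX c) hc)). Qed.

Lemma inD_down_closed X x c :
  inD s B X -> X x -> inM s B c -> le s c x -> X c.
Proof.
  intros (chi & hchi & hX) hx hc hcx. apply hX. split; [exact hc|].
  intros Y hY. destruct (hchi Y hY) as (a & b & _ & _ & hYab).
  destruct (proj1 (hYab x) (proj2 (proj1 (hX x) hx) Y hY)) as [_ haxb].
  apply hYab. split; [exact hc|].
  apply (le_trans HU) with (ml s a x); [apply (mul_mono_l HU)|]; assumption.
Qed.

Lemma inDbar_inD X : inDbar s B X -> inD s B X.
Proof.
  intro hX. exists (fun Y => Y = X). split; [intros Y ->; exact hX|].
  intro c. split.
  - intro hc. split; [exact (inDbar_inM X hX c hc)|]. intros Y ->. exact hc.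
  - intros [_ h]. apply h. reflexivity.
Qed.

Lemma Ccl_inD W : inD s B (Ccl s B W).
Proof.
  exists (fun Y => inDbar s B Y /\ subset W Y). split; [intros Y []; assumption|].
  intro c. split; intros [hc h]; split; auto.
  - intros Y []. apply h; assumption.
  - intros Y hY hWY. apply h. split; assumption.
Qed.

Lemma Ccl_extensive W : subset W (inM s B) -> subset W (Ccl s B W).
Proof. intros hW c hc. split; auto. Qed.

Lemma Ccl_mono W V : subset W V -> subset (Ccl s B W) (Ccl s B V).
Proof. intros hWV c [hc h]. split; auto. intros Y hY hVY. apply h; auto. Qed.

Lemma Ccl_least X W : inD s B X -> subset W X -> subset (Ccl s B W) X.
Proof.
  intros (chi & hchi & hX) hWX c [hc h]. apply hX. split; [exact hc|].
  intros Y hY. apply h; [apply hchi, hY|].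
  intros x hx. exact (proj2 (proj1 (hX x) (hWX x hx)) Y hY).
Qed.

Lemma Ccl_eq X W : inD s B X -> subset W X -> subset X W -> Ccl s B W = X.
Proof.
  intros hX hWX hXW. apply set_ext; intro c. split.
  - apply Ccl_least; assumption.
  - intro hc. apply Ccl_extensive; [|exact (hXW c hc)].
    intros d hd. exact (inD_inM X hX d (hWX d hd)).
Qed.

Lemma meetD_inD X Y : inD s B X -> inD s B Y -> inD s B (meetD X Y).
Proof.
  intros (chi & hchi & hX) (psi & hpsi & hY).
  exists (fun Z => chi Z \/ psi Z). split; [intros Z [h|h]; auto|].
  intro c. unfold meetD. rewrite (hX c), (hY c). split.
  - intros [[hc hcX] [_ hcY]]. split; [exact hc|].
    intros Z [hZ|hZ]; [apply hcX|apply hcY]; exact hZ.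
  - intros [hc h]. split.
    + split; [exact hc|]. intros Z hZ. apply h. left. exact hZ.
    + split; [exact hc|]. intros Z hZ. apply h. right. exact hZ.
Qed.

Lemma impD_inD X T : subset X (inM s B) -> inD s B T -> inD s B (impD s B X T).
Proof.
  intros hX (chi & hchi & hT).
  exists (fun Z => exists x a b Y, X x /\ chi Y /\ inM s B a /\ B b /\
                   seteq Y (arr s B a b) /\ Z = arr s B (ml s a x) b).
  split.
  - intros Z (x & a & b & Y & hx & _ & ha & hb & _ & ->).
    exists (ml s a x), b. split; [apply inM_mul; auto|]. split; [exact hb|].
    intro; reflexivity.
  - intro c. split.
    + intros [hc hXT]. split; [exact hc|].
      intros Z (x & a & b & Y & hx & hY & _ & _ & hYab & ->).
      destruct (proj1 (hYab _) (proj2 (proj1 (hT _) (hXT x hx)) Y hY)) as [_ h].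
      split; [exact hc|]. rewrite <- (mul_assoc HU). exact h.
    + intros [hc hZ]. split; [exact hc|]. intros x hx. apply hT.
      split; [apply inM_mul; auto|]. intros Y hY.
      destruct (hchi Y hY) as (a & b & ha & hb & hYab). apply hYab.
      split; [apply inM_mul; auto|]. rewrite (mul_assoc HU).
      refine (proj2 (hZ (arr s B (ml s a x) b) _)).
      exists x, a, b, Y. auto 7.
Qed.

Lemma down_arr b : down s B b = arr s B (ue s) b.
Proof. apply set_ext; intro c. unfold down, arr. rewrite (mul_e_l HU). tauto. Qed.

Lemma down_inD b : B b -> inD s B (down s B b).
Proof.
  intro hb. rewrite down_arr. apply inDbar_inD.
  exists (ue s), b. split; [constructor|]. split; [exact hb|]. intro; reflexivity.
Qed.

Lemma botD_subset X : inD s B X -> subset (botD s B) X.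
Proof.
  intros (chi & hchi & hX) c [hc hcb]. apply hX. split; [exact hc|].
  intros Y hY. destruct (hchi Y hY) as (a & b & _ & _ & hYab). apply hYab.
  split; [exact hc|]. apply (le_trans HU) with (ml s a (ub s)).
  - apply (mul_mono_l HU), hcb.
  - apply (residuation HU), (le_bot HU).
Qed.

Lemma simD_antitone X Y : subset X Y -> subset (simD s B Y) (simD s B X).
Proof. intros hXY c [hc h]. split; auto. Qed.

Lemma subset_simD_simD X : subset X (inM s B) -> subset X (simD s B (simD s B X)).
Proof.
  intros hX c hc. split; [exact (hX c hc)|]. intros d [_ hd].
  rewrite (mul_comm HU). exact (hd c hc).
Qed.

Section Involutive.
Hypothesis Hnn : forall x, neg s (neg s x) = x.
Hypothesis HBneg : forall b, B b -> B (neg s b).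

Lemma arr_simD_simD a b :
  inM s B a -> B b -> seteq (arr s B a b) (simD s B (simD s B (arr s B a b))).
Proof.
  intros ha hb c. split; [apply subset_simD_simD; intros d []; assumption|].
  intros [hc h]. split; [exact hc|].
  assert (hw : simD s B (arr s B a b) (ml s (neg s b) a)).
  { split; [constructor; auto|].
    intros x [hx haxb]. split; [apply inM_mul; [exact hx|constructor; auto]|].
    rewrite (mul_comm HU), <- (mul_assoc HU). apply (le_neg_mul HU Hnn), haxb. }
  destruct (h _ hw) as [_ hwc]. rewrite <- (mul_assoc HU) in hwc.
  apply (le_neg_mul HU Hnn), hwc.
Qed.

Lemma inD_simD_simD X : inD s B X -> seteq X (simD s B (simD s B X)).
Proof.
  intros hX c. split; [apply subset_simD_simD; apply inD_inM, hX|].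
  intro hc. destruct hX as (chi & hchi & hX). apply hX. split; [apply hc|].
  intros Y hY. destruct (hchi Y hY) as (a & b & ha & hb & hYab).
  apply set_ext in hYab. subst Y. apply arr_simD_simD; [exact ha|exact hb|].
  revert c hc. apply simD_antitone, simD_antitone.
  intros x hx. exact (proj2 (proj1 (hX x) hx) _ hY).
Qed.

End Involutive.

Definition setmul (W V : A -> Prop) : A -> Prop :=
  fun z => exists x y, W x /\ V y /\ z = ml s x y.

Lemma mulD_setmul X Y : mulD s B X Y = Ccl s B (setmul X Y).
Proof. reflexivity. Qed.

Lemma setmul_inM W V :
  subset W (inM s B) -> subset V (inM s B) -> subset (setmul W V) (inM s B).
Proof. intros hW hV z (x & y & hx & hy & ->). apply inM_mul; auto. Qed.

Lemma setmul_comm W V : setmul W V = setmul V W.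
Proof.
  apply set_ext; intro c.
  split; intros (x & y & hx & hy & ->); exists y, x; rewrite (mul_comm HU); auto.
Qed.

Lemma setmul_assoc W V U : setmul W (setmul V U) = setmul (setmul W V) U.
Proof.
  apply set_ext; intro c. split.
  - intros (x & _ & hx & (y & z & hy & hz & ->) & ->).
    exists (ml s x y), z. rewrite (mul_assoc HU). repeat esplit; eauto.
  - intros (_ & z & (x & y & hx & hy & ->) & hz & ->).
    exists x, (ml s y z). rewrite (mul_assoc HU). repeat esplit; eauto.
Qed.

Lemma Ccl_setmul_Ccl_r W V :
  subset W (inM s B) -> subset V (inM s B) ->
  Ccl s B (setmul W (Ccl s B V)) = Ccl s B (setmul W V).
Proof.
  intros hW hV. apply set_ext; intro c. split.
  - apply Ccl_least; [apply Ccl_inD|]. intros z (x & y & hx & hy & ->).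
    assert (hVW : subset (Ccl s B V) (impD s B W (Ccl s B (setmul W V)))).
    { apply Ccl_least; [apply impD_inD; [exact hW|apply Ccl_inD]|].
      intros y' hy'. split; [exact (hV y' hy')|]. intros x' hx'.
      apply Ccl_extensive; [apply setmul_inM; assumption|]. exists x', y'. auto. }
    exact (proj2 (hVW y hy) x hx).
  - apply Ccl_mono. intros z (x & y & hx & hy & ->). exists x, y.
    split; [exact hx|]. split; [apply Ccl_extensive; auto|reflexivity].
Qed.

Lemma impD_Ccl_l W Z :
  subset W (inM s B) -> inD s B Z -> impD s B (Ccl s B W) Z = impD s B W Z.
Proof.
  intros hW hZ. apply set_ext; intro c. split.
  - intros [hc h]. split; [exact hc|]. intros x hx. apply h, Ccl_extensive; auto.
  - intros [hc h]. split; [exact hc|].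
    assert (hWc : subset (Ccl s B W) (impD s B (fun d => d = c) Z)).
    { apply Ccl_least; [apply impD_inD; [intros d ->; exact hc|exact hZ]|].
      intros w hw. split; [exact (hW w hw)|]. intros d ->.
      rewrite (mul_comm HU). exact (h w hw). }
    intros x hx. rewrite (mul_comm HU). exact (proj2 (hWc x hx) c eq_refl).
Qed.

Lemma joinD_Ccl_l W V :
  subset W (inM s B) -> subset V (inM s B) ->
  joinD s B (Ccl s B W) V = joinD s B W V.
Proof.
  intros hW hV. apply set_ext; intro c. split.
  - apply Ccl_least; [apply Ccl_inD|]. intros z [hz|hz].
    + revert z hz. apply Ccl_mono. intros x hx. left. exact hx.
    + apply Ccl_extensive; [intros x [hx|hx]; auto|]. right. exact hz.
  - apply Ccl_mono. intros z [hz|hz]; [left; apply Ccl_extensive|right]; auto.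
Qed.

Lemma joinD_comm X Y : joinD s B X Y = joinD s B Y X.
Proof. unfold joinD. f_equal. apply set_ext; intro; tauto. Qed.

Lemma joinD_of_subset X Y : inD s B Y -> subset X Y -> joinD s B X Y = Y.
Proof.
  intros hY hXY. apply Ccl_eq; [exact hY| |intros z hz; right; exact hz].
  intros z [hz|hz]; auto.
Qed.

Lemma eD_subset_impD_self Y : inD s B Y -> subset (eD s B) (impD s B Y Y).
Proof.
  intros hY c [hc hce]. split; [exact hc|]. intros y hy.
  apply (inD_down_closed Y y); [exact hY|exact hy|apply inM_mul; auto; apply (inD_inM Y hY y hy)|].
  rewrite <- (mul_e_r HU y) at 2. apply (mul_mono_l HU), hce.
Qed.

Lemma union_inM X Y :
  inD s B X -> inD s B Y -> subset (fun z => X z \/ Y z) (inM s B).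
Proof. intros hX hY z [hz|hz]; [apply (inD_inM X)|apply (inD_inM Y)]; assumption. Qed.

Lemma joinD_assoc X Y Z :
  inD s B X -> inD s B Y -> inD s B Z ->
  joinD s B X (joinD s B Y Z) = joinD s B (joinD s B X Y) Z.
Proof.
  intros hX hY hZ. rewrite (joinD_comm X). unfold joinD at 2 4.
  rewrite !joinD_Ccl_l by (apply union_inM || apply inD_inM; assumption).
  unfold joinD. f_equal. apply set_ext; intro; tauto.
Qed.

Lemma meetD_joinD_absorb X Y :
  inD s B X -> inD s B Y -> meetD X (joinD s B X Y) = X.
Proof.
  intros hX hY. apply set_ext; intro c. unfold meetD. split; [tauto|].
  intro hc. split; [exact hc|]. apply Ccl_extensive; [apply union_inM; auto|left; exact hc].
Qed.

Lemma joinD_meetD_absorb X Y : inD s B X -> joinD s B X (meetD X Y) = X.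
Proof. intro hX. rewrite joinD_comm. apply joinD_of_subset; [exact hX|]. intros c []; auto. Qed.

Lemma joinD_botD_l X : inD s B X -> joinD s B (botD s B) X = X.
Proof. intro hX. apply joinD_of_subset, botD_subset; exact hX. Qed.

Lemma meetD_topD_l X : inD s B X -> meetD (topD s B) X = X.
Proof.
  intro hX. apply set_ext; intro c. unfold meetD. split; [tauto|].
  intro hc. split; [|exact hc]. split; [apply (inD_inM X hX c hc)|apply (le_top HU)].
Qed.

Lemma mulD_assoc X Y Z :
  inD s B X -> inD s B Y -> inD s B Z ->
  mulD s B X (mulD s B Y Z) = mulD s B (mulD s B X Y) Z.
Proof.
  intros hX hY hZ. apply inD_inM in hX, hY, hZ. rewrite !mulD_setmul.
  rewrite Ccl_setmul_Ccl_r, setmul_assoc by auto using setmul_inM.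
  rewrite (setmul_comm (Ccl s B _)), Ccl_setmul_Ccl_r by auto using setmul_inM.
  rewrite setmul_comm. reflexivity.
Qed.

Lemma mulD_comm X Y : mulD s B X Y = mulD s B Y X.
Proof. rewrite !mulD_setmul, setmul_comm. reflexivity. Qed.

Lemma mulD_eD_l X : inD s B X -> mulD s B (eD s B) X = X.
Proof.
  intro hX. apply Ccl_eq; [exact hX| |].
  - intros z (c & x & [hc hce] & hx & ->). apply (inD_down_closed X x); [exact hX|exact hx| |].
    + apply inM_mul; [exact hc|apply (inD_inM X hX x hx)].
    + rewrite <- (mul_e_l HU x) at 2. apply (mul_mono_r HU), hce.
  - intros x hx. exists (ue s), x. split; [split; [constructor|apply (le_refl HU)]|].
    split; [exact hx|]. symmetry. apply (mul_e_l HU).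
Qed.

Lemma mulD_subset_iff X Y Z :
  inD s B X -> inD s B Y -> inD s B Z ->
  subset (mulD s B X Y) Z <-> subset Y (impD s B X Z).
Proof.
  intros hX hY hZ. split.
  - intros h y hy. split; [exact (inD_inM Y hY y hy)|]. intros x hx.
    apply h, Ccl_extensive; [apply setmul_inM; apply inD_inM; assumption|].
    exists x, y. auto.
  - intro h. apply Ccl_least; [exact hZ|]. intros z (x & y & hx & hy & ->).
    exact (proj2 (h y hy) x hx).
Qed.

Section Linear.
Hypothesis Hlin : linear s.

Lemma inD_chain X Y : inD s B X -> inD s B Y -> subset X Y \/ subset Y X.
Proof.
  intros hX hY. destruct (classic (subset X Y)) as [hXY|hXY]; [left; exact hXY|right].
  apply not_all_ex_not in hXY as [x hx]. apply imply_to_and in hx as [hxX hxY].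
  intros y hy. destruct (Hlin x y) as [hle|hle].
  - exfalso. apply hxY, (inD_down_closed Y y); auto. apply (inD_inM X hX x hxX).
  - apply (inD_down_closed X x); auto. apply (inD_inM Y hY y hy).
Qed.

Definition lamD U W : A -> Prop := meetD (impD s B U (mulD s B W U)) (eD s B).

Lemma lamD_of_eD_subset U W :
  inD s B U -> inD s B W -> subset (eD s B) W -> lamD U W = eD s B.
Proof.
  intros hU hW hWe. apply set_ext; intro c. split; [intros []; assumption|].
  intro hc. split; [|exact hc]. split; [apply hc|]. intros u hu.
  apply Ccl_extensive; [apply setmul_inM; apply inD_inM; assumption|].
  exists c, u. split; [exact (hWe c hc)|]. split; [exact hu|apply (mul_comm HU)].
Qed.

Lemma lamD_subset_eD U W : subset (lamD U W) (eD s B).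
Proof. intros c []. assumption. Qed.

Hypothesis HBe : B (ue s).

Lemma prelinearity_D X Y U V :
  inD s B X -> inD s B Y -> inD s B U -> inD s B V ->
  joinD s B (lamD U (impD s B (joinD s B X Y) X))
            (lamD V (impD s B (joinD s B X Y) Y)) = eD s B.
Proof.
  intros hX hY hU hV.
  assert (heD : inD s B (eD s B)) by (apply down_inD; exact HBe).
  destruct (inD_chain X Y hX hY) as [hXY|hYX].
  - rewrite (joinD_of_subset X Y hY hXY).
    rewrite (lamD_of_eD_subset V); [| assumption | | apply eD_subset_impD_self, hY].
    2: apply impD_inD; [apply inD_inM|]; exact hY.
    apply joinD_of_subset; [exact heD|apply lamD_subset_eD].
  - rewrite (joinD_comm X Y), (joinD_of_subset Y X hX hYX).
    rewrite (lamD_of_eD_subset U); [| assumption | | apply eD_subset_impD_self, hX].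
    2: apply impD_inD; [apply inD_inM|]; exact hX.
    rewrite joinD_comm. apply joinD_of_subset; [exact heD|apply lamD_subset_eD].
Qed.

Hypothesis Hw : forall x, im s x (ue s) = im s (ml s x x) (ue s).

Lemma impD_eD_mulD_self X : inD s B X -> impD s B X (eD s B) = impD s B (mulD s B X X) (eD s B).
Proof.
  intro hX. pose proof (inD_inM X hX) as hXM.
  rewrite mulD_setmul, impD_Ccl_l by (apply setmul_inM || apply down_inD; auto).
  apply set_ext; intro c. split.
  - intros [hc h]. split; [exact hc|]. intros z (x & y & hx & hy & ->).
    split; [apply inM_mul; [apply inM_mul|]; auto|].
    destruct (Hlin x y) as [hle|hle].
    + apply (le_trans HU) with (ml s (ml s y y) c); [|apply (mul_le_e_square HU Hw), (h y hy)].
      apply (mul_mono_r HU), (mul_mono_r HU), hle.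
    + apply (le_trans HU) with (ml s (ml s x x) c); [|apply (mul_le_e_square HU Hw), (h x hx)].
      apply (mul_mono_r HU), (mul_mono_l HU), hle.
  - intros [hc h]. split; [exact hc|]. intros x hx.
    split; [apply inM_mul; auto|].
    destruct (h (ml s x x)) as [_ hxxc]; [exists x, x; auto|].
    apply (residuation HU). rewrite Hw. apply (residuation HU), hxxc.
Qed.

End Linear.
End Construction.

Section AlgebraD.
Context {A : Type} {s : ulsig A} {B : A -> Prop} (HU : is_UL s).
Hypotheses (HBe : B (ue s)) (HBf : B (uf s)) (HBb : B (ub s)) (HBt : B (ut s)).

Definition algD : ulsig (Dty s B) :=
  ULSig
    (fun X Y => exist _ (meetD (proj1_sig X) (proj1_sig Y))
                        (meetD_inD _ _ (proj2_sig X) (proj2_sig Y)))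
    (fun X Y => exist _ (joinD s B (proj1_sig X) (proj1_sig Y)) (Ccl_inD _))
    (fun X Y => exist _ (mulD s B (proj1_sig X) (proj1_sig Y)) (Ccl_inD _))
    (fun X Y => exist _ (impD s B (proj1_sig X) (proj1_sig Y))
                        (impD_inD HU _ _ (inD_inM _ (proj2_sig X)) (proj2_sig Y)))
    (exist _ (eD s B) (down_inD HU _ HBe)) (exist _ (fD s B) (down_inD HU _ HBf))
    (exist _ (botD s B) (down_inD HU _ HBb)) (exist _ (topD s B) (down_inD HU _ HBt)).

Lemma Dty_eq (X Y : Dty s B) : proj1_sig X = proj1_sig Y -> X = Y.
Proof.
  destruct X as [X hX], Y as [Y hY]. simpl. intros ->. f_equal. apply proof_irrelevance.
Qed.

Lemma le_algD (X Y : Dty s B) : le algD X Y <-> subset (proj1_sig X) (proj1_sig Y).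
Proof.
  unfold le. split.
  - intros h c hc. rewrite <- h in hc. apply hc.
  - intro h. apply Dty_eq. simpl. apply set_ext; intro c. unfold meetD. firstorder.
Qed.

Lemma algD_is_UL : linear s -> is_UL algD.
Proof.
  intro Hlin. unfold is_UL. repeat match goal with |- _ /\ _ => split end.
  - intros [X hX] [Y hY] [Z hZ]. apply Dty_eq. apply meetD_assoc; assumption.
  - intros [X hX] [Y hY] [Z hZ]. apply Dty_eq. apply joinD_assoc; assumption.
  - intros [X hX] [Y hY]. apply Dty_eq. apply meetD_comm; assumption.
  - intros [X hX] [Y hY]. apply Dty_eq. apply joinD_comm; assumption.
  - intros [X hX] [Y hY]. apply Dty_eq. apply meetD_joinD_absorb; assumption.
  - intros [X hX] [Y hY]. apply Dty_eq. apply joinD_meetD_absorb; assumption.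
  - intros [X hX]. apply Dty_eq. apply joinD_botD_l; assumption.
  - intros [X hX]. apply Dty_eq. apply meetD_topD_l; assumption.
  - intros [X hX] [Y hY] [Z hZ]. apply Dty_eq. apply mulD_assoc; assumption.
  - intros [X hX] [Y hY]. apply Dty_eq. apply mulD_comm; assumption.
  - intros [X hX]. apply Dty_eq. apply mulD_eD_l; assumption.
  - intros [X hX] [Y hY] [Z hZ]. rewrite !le_algD. apply mulD_subset_iff; assumption.
  - intros [X hX] [Y hY] [U hU] [V hV]. apply Dty_eq. apply prelinearity_D; assumption.
Qed.

Lemma algD_is_IUL :
  linear s -> (forall x, neg s (neg s x) = x) -> (forall b, B b -> B (neg s b)) ->
  (forall x, im s x (ue s) = im s (ml s x x) (ue s)) -> is_IUL algD.
Proof.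
  intros Hlin Hnn HBneg Hw. split; [|split].
  - apply algD_is_UL, Hlin.
  - intros [X hX]. apply Dty_eq, eq_sym, set_ext, inD_simD_simD; assumption.
  - intros [X hX]. apply Dty_eq, impD_eD_mulD_self; assumption.
Qed.

End AlgebraD.

Theorem lemma3p9 (A : Type) (s : ulsig A) (B : A -> Prop)
  (HIUL : is_IUL s) (Hlin : linear s)
  (HBe : B (ue s)) (HBf : B (uf s)) (HBb : B (ub s)) (HBt : B (ut s))
  (HBneg : forall b, B b -> B (neg s b)) :
  (* (i) *)
  (forall b, B b -> seteq (down s B b) (simD s B (simD s B (down s B b)))) /\
  (* (ii) *)
  (forall a b, inM s B a -> B b ->
     seteq (arr s B a b) (simD s B (simD s B (arr s B a b)))) /\
  (* (iii) *)
  (forall X, inD s B X -> seteq X (simD s B (simD s B X))) /\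
  (* (iv) *)
  (exists sD : ulsig (Dty s B),
     (forall X Y : Dty s B,
        seteq (proj1_sig (mt sD X Y)) (meetD (proj1_sig X) (proj1_sig Y))) /\
     (forall X Y : Dty s B,
        seteq (proj1_sig (jn sD X Y)) (joinD s B (proj1_sig X) (proj1_sig Y))) /\
     (forall X Y : Dty s B,
        seteq (proj1_sig (ml sD X Y)) (mulD s B (proj1_sig X) (proj1_sig Y))) /\
     (forall X Y : Dty s B,
        seteq (proj1_sig (im sD X Y)) (impD s B (proj1_sig X) (proj1_sig Y))) /\
     seteq (proj1_sig (ue sD)) (eD s B) /\
     seteq (proj1_sig (uf sD)) (fD s B) /\
     seteq (proj1_sig (ub sD)) (botD s B) /\
     seteq (proj1_sig (ut sD)) (topD s B) /\
     is_IUL sD).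
Proof.
  destruct HIUL as (HU & Hnn & Hw).
  split; [|split; [|split]].
  - intros b hb. rewrite (down_arr HU). apply arr_simD_simD; auto. constructor.
  - intros a b. apply arr_simD_simD; assumption.
  - intros X. apply inD_simD_simD; assumption.
  - exists (algD HU HBe HBf HBb HBt).
    do 8 (split; [intros ** c; reflexivity|]).
    apply algD_is_IUL; assumption.
Qed.
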